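(* Let $L$ be the unnormalized Laplacian of a simple undirected network with $M$ edges, with simple eigenvalues $\lambda_1,\dots,\lambda_N$ and orthonormal eigenvectors $\bm v^{(1)},\dots,\bm v^{(N)}$. Suppose the network is modified by adding (resp. removing) an unweighted edge $(p,q)$, encoded by the Laplacian perturbation matrix $\Delta L^{(pq)}$ with $\Delta L^{(pq)}_{pp}=\Delta L^{(pq)}_{qq}=\pm1$, $\Delta L^{(pq)}_{pq}=\Delta L^{(pq)}_{qp}=\mp1$, and all other entries $0$ (upper sign for addition, lower sign for removal). Let $L(\epsilon)=L+\epsilon\,\Delta L^{(pq)}$, assume its eigenvalues $\lambda_i(\epsilon)$ are simple, and let $h(\epsilon)=-\sum_i\frac{\lambda_i(\epsilon)}{2M}\log_2\frac{\lambda_i(\epsilon)}{2M}$. Then $h(\epsilon)=h(0)+\epsilon h'(0)+\mathcal{O}(\epsilon^2)$ with $$h'(0)=-\frac{1}{2M}\sum_{i=1}^N\pm\left(\bm v^{(i)}_p-\bm v^{(i)}_q\right)^2\left(\log_2\frac{\lambda_i}{2M}+\frac{1}{\ln 2}\right),$$ where $\pm$ is $+$ for addition and $-$ for removal.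
   Context: For a simple undirected unweighted network with adjacency matrix $A$ and degree matrix $D$, the unnormalized Laplacian is $L=D-A$. The von Neumann entropy of a network with $M$ edges and Laplacian eigenvalues $\lambda_i$ is $-\sum_i\frac{\lambda_i}{2M}\log_2\frac{\lambda_i}{2M}$ with $0\log_2 0=0$. *)

From HB Require Import structures.
From mathcomp Require Import all_boot all_order all_algebra.
From mathcomp Require Import all_classical all_reals all_analysis.
Set Implicit Arguments. Unset Strict Implicit. Unset Printing Implicit Defensive.
Import Order.TTheory GRing.Theory Num.Theory.
Local Open Scope ring_scope.

Definition simple_graph (N : nat) (adj : rel 'I_N) : Prop :=
  symmetric adj /\ irreflexive adj.

Definition vdegree (N : nat) (adj : rel 'I_N) (i : 'I_N) : nat :=
  #|[set j | adj i j]|.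

Definition num_edges (N : nat) (adj : rel 'I_N) : nat :=
  #|[set e : 'I_N * 'I_N | adj e.1 e.2 && (e.1 < e.2)%N]|.

Definition laplacian (R : realType) (N : nat) (adj : rel 'I_N) : 'M[R]_N :=
  \matrix_(i, j) ((i == j)%:R * (vdegree adj i)%:R - (adj i j)%:R).

Definition edge_pert (R : realType) (N : nat) (add : bool) (p q : 'I_N) : 'M[R]_N :=
  let s : R := if add then 1 else -1 in
  \matrix_(i, j)
    (if i == j then (if (i == p) || (i == q) then s else 0)
     else if ((i == p) && (j == q)) || ((i == q) && (j == p)) then - s else 0).

Definition log2 (R : realType) (x : R) : R := ln x / ln 2.

Definition xlog2x (R : realType) (x : R) : R := if x == 0 then 0 else x * log2 x.

Definition vn_entropy (R : realType) (N M : nat) (lam : 'I_N -> R) : R :=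
  - \sum_(i < N) xlog2x (lam i / (2 * M%:R)).

From HB Require Import structures.
From mathcomp Require Import all_boot all_order all_algebra.
From mathcomp Require Import all_classical all_reals all_analysis.
From mathcomp Require Import ring lra.
Import Order.TTheory GRing.Theory Num.Theory numFieldNormedType.Exports.
Local Open Scope ring_scope.
Set Implicit Arguments.
Unset Strict Implicit.

(* To first order in eps the eigenvalues of L + eps dL are lam_i + eps <v_i, dL v_i>
   = lam_i +- eps (v_ip - v_iq)^2, with an O(eps^2) error: the test vector v_i + eps w_i,
   w_i the first-order eigenvector correction, has residual O(eps^2), and for a symmetric
   matrix a residual r at mu forces an eigenvalue within |r| / |x| of mu.  For small eps the
   gaps of the simple spectrum turn this into a bijection between the two spectra.  The
   eigenvalue 0 stays exactly 0, since the constant vector lies in the kernel of every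
   L + eps dL, and its eigenvector v_i is constant, so its first-order term vanishes; this
   matters because x log x is not differentiable at 0.  For lam_i > 0 the entropy is
   expanded termwise using 0 <= a ln a - l ln l - (a - l)(ln l + 1) <= (a - l)^2 / l. *)

Lemma dist_le_first_order (R : realFieldType) (a l d e K : R) :
  0 <= K -> `|e| <= 1 -> `|a - (l + e * d)| <= K * e ^+ 2 ->
  `|a - l| <= (`|d| + K) * `|e|.
Proof.
move=> K_ge0 e_le1 approx.
have e2_le : e ^+ 2 <= `|e|.
  by rewrite -real_normK ?num_real // expr2 ler_piMl ?normr_ge0.
have -> : a - l = (a - (l + e * d)) + e * d by ring.
apply: le_trans (ler_normD _ _) _.
by rewrite mulrDl addrC normrM mulrC lerD // (le_trans approx) // ler_wpM2l.
Qed.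

Lemma nbhs0_mul_lt (R : realFieldType) (c g : R) : 0 <= c -> 0 < g ->
  \forall e \near (0 : R), c * `|e| < g.
Proof.
move=> c_ge0 g_gt0; have c1_gt0 : 0 < c + 1 by rewrite ltr_wpDl.
near=> e.
have : `|e| < g / (c + 1) by near: e; apply: (@nbhs0_lt _ R); rewrite divr_gt0.
rewrite ltr_pdivlMr // => lt_g; apply: le_lt_trans lt_g.
by rewrite mulrC; apply: ler_wpM2l; rewrite ?normr_ge0 ?lerDl.
Unshelve. all: by end_near.
Qed.

(** * Real vectors and symmetric matrices *)

Section RealVectors.
Variables (R : rcfType) (N : nat).
Implicit Types (x y : 'I_N -> R) (A : 'M[R]_N) (u : 'I_N -> 'I_N -> R).

Definition dot x y : R := \sum_k x k * y k.

Definition mulmxv A x : 'I_N -> R := fun k => \sum_l A k l * x l.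

Definition orthonormal u := forall i j, dot (u i) (u j) = (i == j)%:R.

Lemma dotC x y : dot x y = dot y x.
Proof. by apply: eq_bigr => k _; rewrite mulrC. Qed.

Lemma dot_ge0 x : 0 <= dot x x.
Proof. by apply: sumr_ge0 => k _; rewrite -expr2 sqr_ge0. Qed.

Lemma dot_gt0 x k : x k != 0 -> 0 < dot x x.
Proof.
move=> xk; rewrite /dot (bigD1 k) //= ltr_pwDl ?sumr_ge0 // => [|l _].
  by rewrite -expr2 exprn_even_gt0.
by rewrite -expr2 sqr_ge0.
Qed.

Lemma dotZl (a : R) x y : dot (fun k => a * x k) y = a * dot x y.
Proof. by rewrite /dot mulr_sumr; apply: eq_bigr => k _; rewrite mulrA. Qed.

Lemma dot_delta k x : dot (fun l => (l == k)%:R) x = x k.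
Proof. by rewrite /dot (bigD1 k) //= eqxx mul1r big1 ?addr0 // => l /negbTE ->; rewrite mul0r. Qed.

Lemma dot_sum x (P : pred 'I_N) (c : 'I_N -> R) u :
  dot x (fun k => \sum_(j | P j) c j * u j k) = \sum_(j | P j) c j * dot x (u j).
Proof.
rewrite /dot; under eq_bigr do rewrite mulr_sumr.
rewrite exchange_big; apply: eq_bigr => j _; rewrite mulr_sumr.
by apply: eq_bigr => k _; ring.
Qed.

Lemma mulmxv_sum A (P : pred 'I_N) (c : 'I_N -> R) u k :
  mulmxv A (fun l => \sum_(j | P j) c j * u j l) k = \sum_(j | P j) c j * mulmxv A (u j) k.
Proof. exact: dot_sum. Qed.

Lemma mulmxvDZl A B (e : R) x k :
  mulmxv (A + e *: B) x k = mulmxv A x k + e * mulmxv B x k.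
Proof.
rewrite /mulmxv mulr_sumr -big_split; apply: eq_bigr => l _.
by rewrite !mxE mulrDl mulrA.
Qed.

Lemma dotDZ y z (e : R) :
  dot (fun l => y l + e * z l) (fun l => y l + e * z l) =
  dot y y + 2 * e * dot y z + e ^+ 2 * dot z z.
Proof.
by rewrite /dot !mulr_sumr -!big_split; apply: eq_bigr => l _; rewrite /=; ring.
Qed.

Lemma mulmxvDZr A y z (e : R) k :
  mulmxv A (fun l => y l + e * z l) k = mulmxv A y k + e * mulmxv A z k.
Proof.
by rewrite /mulmxv mulr_sumr -big_split; apply: eq_bigr => l _; rewrite /=; ring.
Qed.

Lemma dot_mulmxv_sym A : A^T = A -> forall x y, dot x (mulmxv A y) = dot (mulmxv A x) y.
Proof.
move=> Asym x y; rewrite /dot /mulmxv.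
under eq_bigr do rewrite mulr_sumr.
under [RHS]eq_bigr do rewrite mulr_suml.
rewrite exchange_big; apply: eq_bigr => l _; apply: eq_bigr => k _.
by rewrite -[in LHS]Asym mxE; ring.
Qed.

Section Orthonormal.
Variables (u : 'I_N -> 'I_N -> R).
Hypothesis u_orth : orthonormal u.

Lemma orthonormal_expand x k : x k = \sum_j dot (u j) x * u j k.
Proof.
pose U : 'M[R]_N := \matrix_(j, l) u j l.
have UUt : U *m U^T = 1%:M.
  by apply/matrixP => i j; rewrite !mxE -u_orth; apply: eq_bigr => l _; rewrite !mxE.
have := congr1 (fun X : 'rV[R]_N => X ord0 k) (mulmx1 (\row_l x l)).
rewrite -(mulmx1C UUt) mulmxA !mxE => <-.
apply: eq_bigr => j _; rewrite !mxE dotC; congr (_ * _).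
by apply: eq_bigr => l _; rewrite !mxE.
Qed.

Lemma parseval x y : dot x y = \sum_j dot (u j) x * dot (u j) y.
Proof.
rewrite {1}/dot; under eq_bigr do rewrite (orthonormal_expand x) mulr_suml.
rewrite exchange_big; apply: eq_bigr => j _ /=.
by rewrite /dot mulr_sumr; apply: eq_bigr => k _; ring.
Qed.

End Orthonormal.

Lemma symmetricDZ A B (e : R) : A^T = A -> B^T = B -> (A + e *: B)^T = A + e *: B.
Proof. by move=> A_sym B_sym; rewrite linearD linearZ /= A_sym B_sym. Qed.

Section SymmetricSpectrum.
Variable A : 'M[R]_N.
Hypothesis A_sym : A^T = A.

Lemma dot_eigenl x y a :
  (forall k, mulmxv A x k = a * x k) -> dot (mulmxv A x) y = a * dot x y.
Proof. by move=> Ax; rewrite -dotZl; apply: eq_bigr => k _; rewrite Ax. Qed.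

Lemma eigenvector_orthogonal x y a b :
  (forall k, mulmxv A x k = a * x k) -> (forall k, mulmxv A y k = b * y k) ->
  a != b -> dot x y = 0.
Proof.
move=> Ax Ay ab.
have : a * dot x y = b * dot x y.
  by rewrite -(dot_eigenl y Ax) -dot_mulmxv_sym // dotC (dot_eigenl x Ay) dotC.
by move/eqP; rewrite -subr_eq0 -mulrBl mulf_eq0 subr_eq0 (negbTE ab) => /eqP.
Qed.

Lemma eigenvalue_exists_eigenvector a : eigenvalue A a ->
  exists2 x, (exists k, x k != 0) & forall k, mulmxv A x k = a * x k.
Proof.
case/eigenvalueP => w wA w_neq0; exists (w ord0).
  apply/existsP; apply: contraNT w_neq0; rewrite negb_exists => /forallP w0.
  by apply/eqP/rowP => k; rewrite mxE; apply/eqP/negPn/w0.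
move=> k; have := congr1 (fun X : 'rV_N => X ord0 k) wA; rewrite !mxE => <-.
by apply: eq_bigr => l _; rewrite -[in LHS]A_sym mxE mulrC.
Qed.

Lemma eigenvalue_of_eigenvector x a k0 :
  x k0 != 0 -> (forall k, mulmxv A x k = a * x k) -> eigenvalue A a.
Proof.
move=> x_k0 Ax; apply/eigenvalueP; exists (\row_k x k); last first.
  by apply: contraNneq x_k0 => /rowP/(_ k0); rewrite !mxE => ->.
apply/rowP => l; rewrite !mxE -Ax; apply: eq_bigr => k _.
by rewrite !mxE -[in RHS]A_sym mxE mulrC.
Qed.

Lemma unit_eigenvector a : eigenvalue A a ->
  exists x, dot x x = 1 /\ forall k, mulmxv A x k = a * x k.
Proof.
case/eigenvalue_exists_eigenvector => x [k xk] Ax.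
have n_gt0 := dot_gt0 xk.
pose c := (Num.sqrt (dot x x))^-1.
exists (fun k => c * x k); split.
  rewrite dotZl dotC dotZl mulrA -expr2 exprVn sqr_sqrtr ?mulVf ?ltW ?gt_eqF //.
move=> l; rewrite -mulrCA -Ax /mulmxv mulr_sumr.
by apply: eq_bigr => m _; rewrite mulrCA.
Qed.

Lemma simple_spectrum_eigenbasis (al : 'I_N -> R) :
  injective al -> (forall j, eigenvalue A (al j)) ->
  exists u, orthonormal u /\ forall j k, mulmxv A (u j) k = al j * u j k.
Proof.
move=> al_inj al_eig.
have [u uP] := choice (fun j => unit_eigenvector (al_eig j)).
exists u; split=> [i j|j]; last exact: (uP j).2.
case: eqVneq => [->|ij]; first exact: (uP j).1.
by apply: eigenvector_orthogonal (uP i).2 (uP j).2 _; rewrite (inj_eq al_inj).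
Qed.

Section Eigenbasis.
Variables (al : 'I_N -> R) (u : 'I_N -> 'I_N -> R).
Hypotheses (u_orth : orthonormal u) (Au : forall j k, mulmxv A (u j) k = al j * u j k).

(* The argument [j0] only witnesses that 'I_N is inhabited. *)
Lemma residual_bound (j0 : 'I_N) x mu :
  let r k := mulmxv A x k - mu * x k in
  exists j, (al j - mu) ^+ 2 * dot x x <= dot r r.
Proof.
move=> r.
have [j _ j_min] := @arg_minP _ R _ j0 xpredT (fun j => (al j - mu) ^+ 2) isT.
exists j; rewrite (parseval u_orth x x) (parseval u_orth r r) mulr_sumr.
apply: ler_sum => i _.
have -> : dot (u i) r = (al i - mu) * dot (u i) x.
  rewrite mulrBl -(dot_eigenl x (Au i)) -dot_mulmxv_sym //.
  by rewrite /dot mulr_sumr -sumrB; apply: eq_bigr => k _; rewrite /r; ring.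
rewrite [in X in _ <= X]mulrACA -!expr2.
by apply: ler_wpM2r; [exact: sqr_ge0 | exact: j_min].
Qed.

Lemma eigenvalue_mem_spectrum mu : eigenvalue A mu -> exists j, al j = mu.
Proof.
case/eigenvalue_exists_eigenvector => x [k xk] Ax.
have [j] := residual_bound k x mu; rewrite /=.
have -> : (fun l => mulmxv A x l - mu * x l) = fun=> 0.
  by apply/funext => l; rewrite Ax subrr.
rewrite {2}/dot big1 ?mulr0 // pmulr_lle0 ?(dot_gt0 xk) // => j_mu; exists j.
by apply/eqP; rewrite -subr_eq0 -sqrf_eq0 eq_le j_mu sqr_ge0.
Qed.

Lemma simple_eigenspace i x : injective al ->
  (forall k, mulmxv A x k = al i * x k) -> forall k, x k = dot (u i) x * u i k.
Proof.
move=> al_inj Ax k.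
rewrite (orthonormal_expand u_orth x k) (bigD1 i) //= big1 ?addr0 // => j ji.
by rewrite (eigenvector_orthogonal (Au j) Ax) ?mul0r // (inj_eq al_inj).
Qed.

End Eigenbasis.

End SymmetricSpectrum.

(** * First-order perturbation of a simple spectrum *)

Section FirstOrderPerturbation.
Variables (L D : 'M[R]_N) (lam : 'I_N -> R) (v : 'I_N -> 'I_N -> R).
Hypotheses (L_sym : L^T = L) (D_sym : D^T = D) (lam_inj : injective lam).
Hypotheses (v_orth : orthonormal v) (Lv : forall i k, mulmxv L (v i) k = lam i * v i k).

Let perturbed_sym e := symmetricDZ e L_sym D_sym.

Let coef i j := dot (v j) (mulmxv D (v i)).
(* First-order (Rayleigh-Schroedinger) correction of the eigenvector [v i]. *)
Let corr i k := \sum_(j | j != i) coef i j / (lam i - lam j) * v j k.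
Let resid i k := mulmxv D (corr i) k - coef i i * corr i k.

Lemma first_order_correction i k :
  mulmxv L (corr i) k - lam i * corr i k = coef i i * v i k - mulmxv D (v i) k.
Proof.
rewrite (orthonormal_expand v_orth (mulmxv D (v i)) k) [X in _ = _ - X](bigD1 i) //=.
rewrite mulmxv_sum /corr mulr_sumr -sumrB opprD addrA -/(coef i i) subrr sub0r -sumrN.
apply: eq_bigr => j ji; rewrite Lv.
have : lam i - lam j != 0 by rewrite subr_eq0 (inj_eq lam_inj) eq_sym.
by rewrite /coef => ?; field.
Qed.

Lemma first_order_residual i (e : R) k :
  let x l := v i l + e * corr i l in
  mulmxv (L + e *: D) x k - (lam i + e * coef i i) * x k = e ^+ 2 * resid i k.
Proof.
rewrite /= mulmxvDZl !mulmxvDZr Lv /resid.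
have -> : mulmxv L (corr i) k =
    lam i * corr i k + (coef i i * v i k - mulmxv D (v i) k).
  by rewrite -first_order_correction; ring.
ring.
Qed.

Lemma first_order_eigenvalue : exists2 K, 0 <= K &
  forall (e : R) al u, orthonormal u ->
  (forall j k, mulmxv (L + e *: D) (u j) k = al j * u j k) ->
  forall i, exists j, `|al j - (lam i + e * coef i i)| <= K * e ^+ 2.
Proof.
pose K0 := \sum_i dot (resid i) (resid i).
have K0_ge0 : 0 <= K0 by apply: sumr_ge0 => i _; apply: dot_ge0.
exists (Num.sqrt K0) => [|e al u u_orth Au i]; first exact: sqrtr_ge0.
pose x l := v i l + e * corr i l.
have [m m_res] := residual_bound (perturbed_sym e) u_orth Au i x (lam i + e * coef i i).
exists m.
have x_ge1 : 1 <= dot x x.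
  have vi_corr : dot (v i) (corr i) = 0.
    by rewrite dot_sum big1 // => j ji; rewrite v_orth eq_sym (negbTE ji) mulr0.
  by rewrite dotDZ vi_corr v_orth eqxx mulr0 addr0 lerDl mulr_ge0 ?sqr_ge0 ?dot_ge0.
have resid_le : dot (resid i) (resid i) <= K0.
  by rewrite /K0 (bigD1 i) //= lerDl sumr_ge0 // => j _; apply: dot_ge0.
move: m_res; rewrite /=.
under eq_fun do rewrite first_order_residual.
rewrite dotZl dotC dotZl mulrA -expr2 => m_res.
have -> : Num.sqrt K0 * e ^+ 2 = Num.sqrt (K0 * e ^+ 2 ^+ 2).
  by rewrite sqrtrM // sqrtr_sqr ger0_norm ?sqr_ge0.
rewrite -sqrtr_sqr; apply: ler_wsqrtr.
apply: le_trans (ler_peMr (sqr_ge0 _) x_ge1) _; apply: le_trans m_res _.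
by rewrite mulrC; apply: ler_wpM2r; rewrite ?sqr_ge0.
Qed.

Lemma simple_eigenvalue_matching : exists2 K, 0 <= K &
  \forall e \near (0 : R), forall al, injective al ->
    (forall j, eigenvalue (L + e *: D) (al j)) ->
  exists sg : 'I_N -> 'I_N, [/\ injective sg,
    forall i, `|al (sg i) - (lam i + e * coef i i)| <= K * e ^+ 2 &
    forall i, eigenvalue (L + e *: D) (lam i) -> al (sg i) = lam i].
Proof.
have [K K_ge0 K_approx] := first_order_eigenvalue.
exists K => //; pose Dm i := `|coef i i| + K.
have Dm_ge0 i : 0 <= Dm i by rewrite addr_ge0.
near=> e.
have e_le1 : `|e| <= 1 by near: e; apply: (@nbhs0_le _ R); rewrite ltr01.
have gap : forall i i', i != i' -> (Dm i + Dm i') * `|e| < `|lam i - lam i'|.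
  near: e; apply: filter_forall => i; apply: filter_forall => i'.
  have [<-|ii'] := eqVneq i i'; first exact: nearW.
  have gap_gt0 : 0 < `|lam i - lam i'| by rewrite normr_gt0 subr_eq0 (inj_eq lam_inj).
  by apply: filterS (nbhs0_mul_lt (addr_ge0 (Dm_ge0 i) (Dm_ge0 i')) gap_gt0) => ? + _.
move=> al al_inj al_eig.
have [u [u_orth Au]] := simple_spectrum_eigenbasis (perturbed_sym e) al_inj al_eig.
have [sg sg_approx] := choice (K_approx e al u u_orth Au).
have sg_close i : `|al (sg i) - lam i| <= Dm i * `|e|.
  exact: dist_le_first_order (sg_approx i).
have sg_far i i' : i != i' -> Dm i' * `|e| < `|al (sg i) - lam i'|.
  move=> ii'; have := lt_le_trans (gap i i' ii') (ler_distD (al (sg i)) (lam i) (lam i')).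
  by rewrite distrC mulrDl; have := sg_close i; lra.
have sg_inj : injective sg.
  move=> i i' sgE; apply/eqP/negPn/negP => ii'.
  by have := sg_far i i' ii'; rewrite sgE ltNge sg_close.
exists sg; split => // i lam_eig.
have [j al_j] := eigenvalue_mem_spectrum (perturbed_sym e) u_orth Au lam_eig.
have sg_j := f_finv sg_inj j.
have [ji|ji] := eqVneq (finv sg j) i; first by rewrite -al_j -sg_j ji.
by have := sg_far _ _ ji; rewrite sg_j al_j subrr normr0 ltNge mulr_ge0 ?normr_ge0.
Unshelve. all: by end_near.
Qed.

End FirstOrderPerturbation.

End RealVectors.

(** * Graph Laplacians and edge perturbations *)

Section Laplacian.
Variables (R : realType) (N : nat) (adj : rel 'I_N).
Hypothesis adj_sym : symmetric adj.
Local Notation L := (laplacian R adj).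

Lemma vdegreeE k : (vdegree adj k)%:R = \sum_l (adj k l)%:R :> R.
Proof.
rewrite /vdegree -sum1_card natr_sum big_mkcond /=.
by apply: eq_bigr => l _; rewrite inE; case: (adj k l).
Qed.

Lemma laplacian_sym : L^T = L.
Proof.
apply/matrixP => k l; rewrite !mxE eq_sym adj_sym.
by have [->|_] := eqVneq l k; rewrite ?mul0r.
Qed.

Lemma mulmxv_laplacian x k : mulmxv L x k = \sum_l (adj k l)%:R * (x k - x l).
Proof.
rewrite /mulmxv (eq_bigr (fun l => (k == l)%:R * (vdegree adj k)%:R * x l - (adj k l)%:R * x l)).
  rewrite sumrB (bigD1 k) //= big1 => [|l /negbTE]; last by rewrite eq_sym => ->; rewrite !mul0r.
  by rewrite eqxx mul1r addr0 vdegreeE mulr_suml -sumrB; apply: eq_bigr => l _; ring.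
by move=> l _; rewrite mxE mulrBl.
Qed.

Lemma mulmxv_laplacian_const (c : R) k : mulmxv L (fun=> c) k = 0.
Proof. by rewrite mulmxv_laplacian big1 // => l _; rewrite subrr mulr0. Qed.

Lemma laplacian_psd x : 0 <= dot x (mulmxv L x).
Proof.
pose a k l : R := (adj k l)%:R.
have quad : dot x (mulmxv L x) = \sum_k \sum_l a k l * (x k * x k - x k * x l).
  by apply: eq_bigr => k _; rewrite mulmxv_laplacian mulr_sumr; apply: eq_bigr => l _; ring.
have swap : dot x (mulmxv L x) = \sum_k \sum_l a k l * (x l * x l - x l * x k).
  by rewrite quad exchange_big; apply: eq_bigr => k _; apply: eq_bigr => l _; rewrite /a adj_sym.
have : 0 <= dot x (mulmxv L x) + dot x (mulmxv L x).
  rewrite [X in X + _]quad swap -big_split sumr_ge0 // => k _.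
  rewrite -big_split sumr_ge0 // => l _ /=.
  rewrite -mulrDr.
  have -> : x k * x k - x k * x l + (x l * x l - x l * x k) = (x k - x l) ^+ 2 by ring.
  by rewrite mulr_ge0 ?ler0n ?sqr_ge0.
lra.
Qed.

Lemma laplacian_spectrum_ge0 (lam : 'I_N -> R) v :
  orthonormal v -> (forall j k, mulmxv L (v j) k = lam j * v j k) -> forall i, 0 <= lam i.
Proof.
move=> v_orth Lv i; have := laplacian_psd (v i).
by rewrite dotC (dot_eigenl (v i) (Lv i)) v_orth eqxx mulr1.
Qed.

Lemma laplacian_null_eigenvector_const (lam : 'I_N -> R) v i :
  injective lam -> orthonormal v -> (forall j k, mulmxv L (v j) k = lam j * v j k) ->
  lam i = 0 -> forall k l, v i k = v i l.
Proof.
move=> lam_inj v_orth Lv lam0 k l.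
have one_eig k' : mulmxv L (fun=> 1) k' = lam i * 1.
  by rewrite mulmxv_laplacian_const lam0 mul0r.
have one_exp := simple_eigenspace laplacian_sym v_orth Lv lam_inj one_eig.
have c_neq0 : dot (v i) (fun=> 1) != 0.
  by apply: contra_neq (@oner_neq0 R) => c0; rewrite (one_exp k) c0 mul0r.
by apply: (mulfI c_neq0); rewrite -!one_exp.
Qed.

Variables (add : bool) (p q : 'I_N).
Hypothesis pq : p != q.
Local Notation D := (edge_pert R add p q).
Local Notation s := (if add then 1 else -1 : R).

Let ev k : R := (k == p)%:R - (k == q)%:R.

Lemma edge_pert_rank1 k l : D k l = s * ev k * ev l.
Proof.
rewrite mxE /ev; have qp : q != p by rewrite eq_sym.
have [kp|kp] := eqVneq k p; have [kq|kq] := eqVneq k q;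
  have [lp|lp] := eqVneq l p; have [lq|lq] := eqVneq l q;
  try by move: pq; rewrite -[p]kp -kq eqxx.
all: try by move: pq; rewrite -[p]lp -lq eqxx.
all: rewrite ?kp ?kq ?lp ?lq ?eqxx ?[p == _]eq_sym ?[q == _]eq_sym.
all: rewrite ?(negbTE pq) ?(negbTE qp) ?(negbTE kp) ?(negbTE lp) ?(negbTE kq) ?(negbTE lq) /=.
all: try by case: add; rewrite /=; ring.
all: by case: (k == l); ring.
Qed.

Let sum_ev x : \sum_k ev k * x k = x p - x q.
Proof. by under eq_bigr do rewrite mulrBl; rewrite sumrB -!/(dot _ x) !dot_delta. Qed.

Lemma edge_pert_sym : D^T = D.
Proof. by apply/matrixP => k l; rewrite mxE !edge_pert_rank1 mulrAC. Qed.

Lemma mulmxv_edge_pert x k : mulmxv D x k = s * ev k * (x p - x q).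
Proof.
rewrite /mulmxv (eq_bigr (fun l => s * ev k * (ev l * x l))) => [|l _]; last first.
  by rewrite edge_pert_rank1 mulrA.
by rewrite -mulr_sumr sum_ev.
Qed.

Lemma edge_pert_quad x : dot x (mulmxv D x) = s * (x p - x q) ^+ 2.
Proof.
rewrite /dot (eq_bigr (fun k => s * (x p - x q) * (ev k * x k))) => [|k _]; last first.
  by rewrite mulmxv_edge_pert; ring.
by rewrite -mulr_sumr sum_ev -mulrA -expr2.
Qed.

Lemma perturbed_laplacian_eigenvalue0 (e : R) : eigenvalue (L + e *: D) 0.
Proof.
have LD_sym := symmetricDZ e laplacian_sym edge_pert_sym.
apply: (eigenvalue_of_eigenvector LD_sym (x := fun=> 1) (k0 := p)) => [|k].
  exact: oner_neq0.
by rewrite mulmxvDZl mulmxv_laplacian_const mulmxv_edge_pert subrr !mulr0 addr0 mul0r.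
Qed.

Lemma laplacian_edge_spectrum_matching (lam : 'I_N -> R) v (lamE : R -> 'I_N -> R) :
  injective lam -> orthonormal v -> (forall i k, mulmxv L (v i) k = lam i * v i k) ->
  (\forall e \near (0 : R),
    injective (lamE e) /\ forall i, eigenvalue (L + e *: D) (lamE e i)) ->
  exists2 K, 0 <= K & \forall e \near (0 : R), exists2 sg : 'I_N -> 'I_N, injective sg &
    (forall i, `|lamE e (sg i) - (lam i + e * (s * (v i p - v i q) ^+ 2))| <= K * e ^+ 2) /\
    (forall i, lam i = 0 -> lamE e (sg i) = 0).
Proof.
move=> lam_inj v_orth Lv spec.
have [K K_ge0 matching] :=
  simple_eigenvalue_matching laplacian_sym edge_pert_sym lam_inj v_orth Lv.
exists K => //; apply: filterS2 spec matching => e [inj eig] /(_ _ inj eig).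
case=> sg [sg_inj approx sg_fix]; exists sg => //; split => i; first by rewrite -edge_pert_quad.
by move=> lam0; rewrite sg_fix lam0 //; apply: perturbed_laplacian_eigenvalue0.
Qed.

End Laplacian.

(** * Second-order expansion of the entropy *)

Section EntropyExpansion.
Variable R : realType.

Lemma xlog2xE (x : R) : xlog2x x = x * ln x / ln 2.
Proof. by rewrite /xlog2x /log2; case: eqP => [->|_]; rewrite ?mul0r // mulrA. Qed.

Lemma xlnx_tangent_bound (a l : R) : 0 < a -> 0 < l ->
  0 <= a * ln a - l * ln l - (a - l) * (ln l + 1) <= (a - l) ^+ 2 / l.
Proof.
move=> a_gt0 l_gt0.
have ln_le (t : R) : 0 < t -> ln t <= t - 1.
  by move=> t_gt0; have := @le_ln1Dx R (t - 1); rewrite subrKC; apply; lra.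
have lnE : ln (a / l) = ln a - ln l by rewrite ln_div ?posrE.
have -> : a * ln a - l * ln l - (a - l) * (ln l + 1) = a * ln (a / l) - (a - l).
  by rewrite lnE; ring.
have lower : a * (1 - l / a) <= a * ln (a / l).
  rewrite ler_pM2l // lnE; have := ln_le _ (divr_gt0 l_gt0 a_gt0).
  by rewrite ln_div ?posrE //; lra.
have upper : a * ln (a / l) <= a * (a / l - 1) by rewrite ler_pM2l // ln_le ?divr_gt0.
apply/andP; split.
  by move: lower; rewrite mulrBr mulrCA divff ?gt_eqF // mulr1; lra.
move: upper; have -> : a * (a / l - 1) = (a - l) + (a - l) ^+ 2 / l.
  by field; rewrite gt_eqF.
lra.
Qed.

Lemma xlog2x_second_order (c l dl K : R) : 0 < c -> 0 < l -> 0 <= K ->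
  exists C, \forall e \near (0 : R), forall a, `|a - (l + e * dl)| <= K * e ^+ 2 ->
  `|xlog2x (a / c) - xlog2x (l / c) - e * (c^-1 * (dl * (log2 (l / c) + (ln 2)^-1)))|
    <= C * e ^+ 2.
Proof.
move=> c_gt0 l_gt0 K_ge0.
have ln2_gt0 : 0 < ln (2 : R) by rewrite ln_gt0 // ltr1n.
pose Dm := `|dl| + K.
exists ((Dm ^+ 2 / (c * l) + K * `|ln (l / c) + 1| / c) / ln 2).
near=> e.
have e_le1 : `|e| <= 1 by near: e; apply: (@nbhs0_le _ R); rewrite ltr01.
have e_small : Dm * `|e| < l by near: e; apply: nbhs0_mul_lt; rewrite ?addr_ge0.
move=> a a_approx.
have a_close : `|a - l| <= Dm * `|e| := dist_le_first_order K_ge0 e_le1 a_approx.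
have a_gt0 : 0 < a by move: a_close; rewrite ler_norml; lra.
have := xlnx_tangent_bound (divr_gt0 a_gt0 c_gt0) (divr_gt0 l_gt0 c_gt0).
set T := _ - _ - _ => /andP[T_ge0 T_le].
set Z := (a - (l + e * dl)) / c * (ln (l / c) + 1).
have -> : xlog2x (a / c) - xlog2x (l / c) - e * (c^-1 * (dl * (log2 (l / c) + (ln 2)^-1)))
    = (T + Z) / ln 2.
  by rewrite !xlog2xE /log2 /T /Z; field; rewrite !gt_eqF.
rewrite normrM [`|_^-1|]gtr0_norm ?invr_gt0 // mulrAC ler_pM2r ?invr_gt0 // mulrDl.
apply: le_trans (ler_normD _ _) (lerD _ _).
  rewrite ger0_norm //; apply: le_trans T_le _.
  have -> : (a / c - l / c) ^+ 2 / (l / c) = (a - l) ^+ 2 / (c * l).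
    by field; rewrite !gt_eqF.
  rewrite [X in _ <= X]mulrAC ler_pM2r ?invr_gt0 ?mulr_gt0 // -[e ^+ 2]real_normK ?num_real //.
  rewrite -exprMn -[(a - l) ^+ 2]real_normK ?num_real //.
  by rewrite ler_pXn2r // ?nnegrE ?normr_ge0 ?mulr_ge0 ?addr_ge0.
rewrite /Z !normrM [`|c^-1|]gtr0_norm ?invr_gt0 //.
rewrite (_ : _ * _ / c * _ = K * e ^+ 2 * c^-1 * `|ln (l / c) + 1|); last by ring.
apply: ler_wpM2r; first exact: normr_ge0.
by apply: ler_wpM2r; [rewrite invr_ge0 ltW | exact: a_approx].
Unshelve. all: by end_near.
Qed.

Lemma xlog2x_sum_second_order (I : finType) (c K : R) (lam dl : I -> R) :
  0 <= c -> 0 <= K -> (forall i, 0 <= lam i) -> (forall i, lam i = 0 -> dl i = 0) ->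
  exists C, \forall e \near (0 : R), forall al : I -> R,
    (forall i, `|al i - (lam i + e * dl i)| <= K * e ^+ 2) ->
    (forall i, lam i = 0 -> al i = 0) ->
  `|\sum_i xlog2x (al i / c) - \sum_i xlog2x (lam i / c)
      - e * (c^-1 * \sum_i dl i * (log2 (lam i / c) + (ln 2)^-1))| <= C * e ^+ 2.
Proof.
move=> c_ge0 K_ge0 lam_ge0 dl0.
pose term e a i := xlog2x (a / c) - xlog2x (lam i / c)
  - e * (c^-1 * (dl i * (log2 (lam i / c) + (ln 2)^-1))).
have term_bound i : exists C, \forall e \near (0 : R), forall a,
    `|a - (lam i + e * dl i)| <= K * e ^+ 2 -> (lam i = 0 -> a = 0) ->
    `|term e a i| <= C * e ^+ 2.
  have xlog2x0 : xlog2x (0 : R) = 0 by rewrite /xlog2x eqxx.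
  (* For c = 0 every term vanishes, since x / 0 = 0. *)
  have [c0|c_neq0] := eqVneq c 0.
    exists 0; near=> e => a _ _.
    by rewrite /term c0 invr0 !(mulr0, mul0r) xlog2x0 !subr0 normr0.
  have [lam0|lam_neq0] := eqVneq (lam i) 0.
    exists 0; near=> e => a _ /(_ lam0) ->.
    by rewrite /term lam0 dl0 // !(mulr0, mul0r) xlog2x0 !subr0 normr0.
  have c_gt0 : 0 < c by rewrite lt_neqAle eq_sym c_neq0.
  have lam_gt0 : 0 < lam i by rewrite lt_neqAle eq_sym lam_neq0 lam_ge0.
  have [C C_bound] := xlog2x_second_order (dl i) c_gt0 lam_gt0 K_ge0.
  by exists C; apply: filterS C_bound => e bound a /bound.
have [C C_bound] := choice term_bound.
exists (\sum_i C i); near=> e.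
have bound : forall i a, `|a - (lam i + e * dl i)| <= K * e ^+ 2 -> (lam i = 0 -> a = 0) ->
    `|term e a i| <= C i * e ^+ 2.
  by near: e; apply: filter_forall => i; exact: C_bound.
move=> al al_approx al0.
rewrite !mulr_sumr -!sumrB mulr_suml; apply: le_trans (ler_norm_sum _ _ _) _.
by apply: ler_sum => i _; apply: bound; [exact: al_approx | exact: al0].
Unshelve. all: by end_near.
Qed.

Lemma vn_entropy_second_order (N M : nat) (K : R) (lam dl : 'I_N -> R) :
  0 <= K -> (forall i, 0 <= lam i) -> (forall i, lam i = 0 -> dl i = 0) ->
  exists C, \forall e \near (0 : R), forall (al : 'I_N -> R) (sg : 'I_N -> 'I_N),
    injective sg -> (forall i, `|al (sg i) - (lam i + e * dl i)| <= K * e ^+ 2) ->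
    (forall i, lam i = 0 -> al (sg i) = 0) ->
  `|vn_entropy M al - vn_entropy M lam
      - e * (- (2 * M%:R)^-1 * \sum_i dl i * (log2 (lam i / (2 * M%:R)) + (ln 2)^-1))|
    <= C * e ^+ 2.
Proof.
move=> K_ge0 lam_ge0 dl0.
have [C bound] := xlog2x_sum_second_order (mulr_ge0 (ler0n R 2) (ler0n R M)) K_ge0 lam_ge0 dl0.
exists C; apply: filterS bound => e bound al sg sg_inj approx al0.
have sign_flip (x y z : R) : - x - - y - e * - z = - (x - y - e * z) by ring.
by rewrite /vn_entropy (reindex_inj sg_inj) mulNr sign_flip normrN; apply: bound.
Qed.

End EntropyExpansion.

Theorem corollary3p13 (R : realType) (N : nat) (adj : rel 'I_N)
    (lam : 'I_N -> R) (v : 'I_N -> 'I_N -> R) (add : bool) (p q : 'I_N)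
    (lamE : R -> 'I_N -> R) :
  simple_graph adj ->
  (* simple eigenvalues lam i with orthonormal eigenvectors v i (components v i k) *)
  injective lam ->
  (forall i k, \sum_(j < N) laplacian R adj k j * v i j = lam i * v i k) ->
  (forall i j, \sum_(k < N) v i k * v j k = (i == j)%:R) ->
  (* adding a non-edge, or removing an existing edge, (p,q) *)
  p != q ->
  (if add then ~~ adj p q else adj p q) ->
  (* lamE eps i : the eigenvalues of L(eps) = L + eps dL, all simple, for eps near 0 *)
  (exists2 d0 : R, 0 < d0 & forall eps : R, `|eps| < d0 ->
     injective (lamE eps) /\
     forall i, eigenvalue (laplacian R adj + eps *: edge_pert R add p q) (lamE eps i)) ->
  let M := num_edges adj in
  let h := fun eps : R => vn_entropy M (lamE eps) in
  let s : R := if add then 1 else -1 in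
  let h'0 := - (2 * M%:R)^-1 *
       \sum_(i < N) s * (v i p - v i q) ^+ 2 *
                    (log2 (lam i / (2 * M%:R)) + (ln (2 : R))^-1) in
  exists C : R, exists2 d : R, 0 < d & forall eps : R, `|eps| < d ->
    `|h eps - h 0 - eps * h'0| <= C * eps ^+ 2.
Proof.
move=> [adj_sym _] lam_inj Lv v_orth pq _ /nbhs_norm0P spec M h s h'0.
have [K K_ge0 matched] :=
  laplacian_edge_spectrum_matching adj_sym pq lam_inj v_orth Lv spec.
have dl0 i : lam i = 0 -> s * (v i p - v i q) ^+ 2 = 0.
  move=> /(laplacian_null_eigenvector_const adj_sym lam_inj v_orth Lv) v_const.
  by rewrite (v_const p q) subrr expr0n mulr0.
have [C entropy] :=
  vn_entropy_second_order M K_ge0 (laplacian_spectrum_ge0 adj_sym v_orth Lv) dl0.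
have h_near : \forall e \near (0 : R), `|h e - vn_entropy M lam - e * h'0| <= C * e ^+ 2.
  by apply: filterS2 matched entropy => e [sg sg_inj [approx al0]]; apply; last exact: al0.
have h0 : h 0 = vn_entropy M lam.
  have := nbhs_singleton h_near; rewrite !mul0r subr0 expr0n mulr0 normr_le0 subr_eq0.
  by move/eqP.
by exists C; apply/nbhs_norm0P; rewrite h0.
Qed.
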